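(* In the setting below, let $c'\in\{s,\dots,c\}$ be such that $\Phi_1,\dots,\Phi_{c'}$ are exactly those among $\Phi_1,\dots,\Phi_c$ all of whose coordinates have non-negative valuation, and set $\varphi_i=\ell_0(\Phi_i)\in\overline{\mathbb{K}}^N$ for $i\le c'$. Then for all $i\in\{1,\dots,s\}$ and $i'\in\{s+1,\dots,c'\}$ we have $\varphi_i\ne\varphi_{i'}$.
   Context: Setting: $\mathbb{K}$ a perfect field, $\mathbf{n}=(n_1,\dots,n_m)$, $N=\sum n_j$, variables $\mathbf{X}_j=(X_{j,1},\dots,X_{j,n_j})$; $\mathbf{f}=(f_1,\dots,f_N)\subset\mathbb{K}[\mathbf{X}]$ non-constant with multi-degrees at most $\mathbf{d}=(\underline{d}_1,\dots,\underline{d}_N)$, $\underline{d}_i=(d_{i,1},\dots,d_{i,m})$; $\mathbb{K}$ of characteristic zero or at least $\max_j\sum_i d_{i,j}$. Start system $\mathbf{g}$: $g_i=\prod_{j=1}^m\prod_{k=0}^{d_{i,j}-1}\kappa_{k+d_{1,j}+\cdots+d_{i-1,j}}(\mathbf{X}_j)$ with $\kappa_r(\mathbf{X}_j)=X_{j,1}+rX_{j,2}+\cdots+r^{n_j-1}X_{j,n_j}+r^{n_j}$; it has $c=\mathscr{C}_{\mathbf{n}}(\mathbf{d})$ nondegenerate roots, where $\mathscr{C}_{\mathbf{n}}(\mathbf{d})$ is the sum of the coefficients of $\prod_i(d_{i,1}\vartheta_1+\cdots+d_{i,m}\vartheta_m)\bmod\langle\vartheta_j^{n_j+1}\rangle_j$.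 Let $\tau=t-1$ and $\mathbf{homot}=t\mathbf{f}+(1-t)\mathbf{g}$ written in $\tau$; $D$ is its Jacobian determinant w.r.t. $\mathbf{X}$, and $\mathfrak{Z}$ is the zero-set, over an algebraic closure of $\overline{\mathbb{K}}((\tau))$, of $\langle\mathbf{homot}\rangle:D^\infty$; it is assumed (as ensured by choosing a linear form separating the roots of $\mathbf{g}$) that $\mathfrak{Z}$ has exactly $c$ points. Let $\mathbb{L}$ be the field of generalized power series $\sum_{i\in I}a_i\tau^i$, $a_i\in\overline{\mathbb{K}}$, with $I\subset\mathbb{Q}$ well-ordered; it contains an algebraic closure of $\overline{\mathbb{K}}((\tau))$. The valuation $\nu(F)$ of nonzero $F\in\mathbb{L}$ is the least exponent with nonzero coefficient; for $\nu(F)\ge0$, $\ell_0(F)$ is the coefficient of $\tau^0$ (extended coordinatewise to vectors). Let $Z(\mathbf{f})=\{\varphi_1,\dots,\varphi_s\}$ be the common zeros of $\mathbf{f}$ in $\overline{\mathbb{K}}^N$ where the Jacobian of $\mathbf{f}$ is invertible, and for $i\le s$ let $\Phi_i\in\overline{\mathbb{K}}[[\tau]]^N$ be the unique power series vector cancelling $\mathbf{homot}$ with $\ell_0(\Phi_i)=\varphi_i$. The points of $\mathfrak{Z}$ are written $\Phi_1,\dots,\Phi_c\in\mathbb{L}^N$, the first $s$ being these power series, and indexed so that the points with all coordinates of non-negative valuation come first. *)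

From HB Require Import structures.
From mathcomp Require Import all_boot all_order all_algebra all_field.
From mathcomp Require Import mpoly.

Set Implicit Arguments.
Unset Strict Implicit.
Unset Printing Implicit Defensive.

Import Order.TTheory GRing.Theory Num.Theory.
Local Open Scope ring_scope.

Definition perfect_field (K : fieldType) : Prop :=
  forall p : nat, p \in [pchar K] -> forall x : K, exists y : K, y ^+ p = x.

Definition is_algebraic_closure (K : fieldType) (F : closedFieldType)
  (iota : {rmorphism K -> F}) : Prop :=
  forall x : F, exists2 p : {poly K}, p != 0 & root (map_poly iota p) x.

(* Variable blocks: N = n_1 + ... + n_m variables, the block X_j       *)
(* consisting of the variables numbered offs n j + k, k < n j.         *)

Definition Ntot (m : nat) (n : 'I_m -> nat) : nat := (\sum_(j < m) n j)%N.

Definition offs (m : nat) (n : 'I_m -> nat) (j : 'I_m) : nat :=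
  (\sum_(j' < m | (j' < j)%N) n j')%N.

(* the variable X_{j,k} (k numbered from 0); the index is always in     *)
(* range, the default 0 is never used.                                  *)
Definition Xv (R : nzRingType) (m : nat) (n : 'I_m -> nat) (j : 'I_m) (k : nat)
  : {mpoly R[Ntot n]} :=
  oapp (fun i : 'I_(Ntot n) => 'X_i) 0 (insub (offs n j + k)%N).
Arguments Xv R {m} n j k.

Definition bdeg (m : nat) (n : 'I_m -> nat) (j : 'I_m)
  (mo : 'X_{1..Ntot n}) : nat :=
  (\sum_(k < n j) oapp (fun i : 'I_(Ntot n) => mo i) 0%N
                      (insub (offs n j + k)%N))%N.
Arguments bdeg {m} n j mo.

Definition multideg_le (R : nzRingType) (m : nat) (n : 'I_m -> nat)
  (p : {mpoly R[Ntot n]}) (dd : 'I_m -> nat) : Prop :=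
  forall mo, mo \in msupp p -> forall j, (bdeg n j mo <= dd j)%N.
Arguments multideg_le {R m} n p dd.

Definition nonconstant (R : nzRingType) (N : nat) (p : {mpoly R[N]}) : Prop :=
  exists2 mo, mo \in msupp p & mo != 0%MM.

Definition jacdet (R : comRingType) (N : nat) (h : 'I_N -> {mpoly R[N]})
  : {mpoly R[N]} :=
  \det (\matrix_(i < N, k < N) mderiv k (h i)).

(* The multihomogeneous Bezout number C_n(d): sum of the coefficients  *)
(* of prod_i (d_{i,1} th_1 + ... + d_{i,m} th_m) mod <th_j^(n_j+1)>.   *)

Definition bezout_poly (m : nat) (n : 'I_m -> nat) (d : 'I_(Ntot n) -> 'I_m -> nat)
  : {mpoly int[m]} :=
  \prod_(i < Ntot n) \sum_(j < m) (d i j)%:R *: 'X_j.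

Definition Cnd (m : nat) (n : 'I_m -> nat) (d : 'I_(Ntot n) -> 'I_m -> nat) : nat :=
  (\sum_(mo <- msupp (bezout_poly d) | [forall j, (mo j <= n j)%N])
     `|(bezout_poly d)@_mo|)%N.

Definition kappa (K : fieldType) (m : nat) (n : 'I_m -> nat) (r : nat) (j : 'I_m)
  : {mpoly K[Ntot n]} :=
  \sum_(l < n j) ((r%:R : K) ^+ l) *: Xv K n j l + ((r%:R : K) ^+ n j)%:MP.

Definition startsys (K : fieldType) (m : nat) (n : 'I_m -> nat)
  (d : 'I_(Ntot n) -> 'I_m -> nat) (i : 'I_(Ntot n)) : {mpoly K[Ntot n]} :=
  \prod_(j < m) \prod_(k < d i j)
     kappa K n (k + \sum_(i' < Ntot n | (i' < i)%N) d i' j)%N j.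
Arguments startsys K {m} n d i.

(* Abstract description of the field L of generalized power series     *)
(* sum_{i in I} a_i tau^i (a_i in Kbar = F, I subset Q well ordered):  *)
(* emb : F -> L (constants), the element tau, the valuation nu (only   *)
(* meaningful on nonzero elements; nu 0 = +oo by convention) and the   *)
(* map l0 (coefficient of tau^0, defined on elements of valuation      *)

Definition vnonneg (L : fieldType) (nu : L -> rat) (x : L) : Prop :=
  x = 0 \/ 0 <= nu x.

Record hahn_like (F L : fieldType) (emb : {rmorphism F -> L}) (tau : L)
  (nu : L -> rat) (l0 : L -> F) : Prop := HahnLike {
  nuM : forall x y, x != 0 -> y != 0 -> nu (x * y) = nu x + nu y;
  nuD : forall x y, x != 0 -> y != 0 -> x + y != 0 ->
          Num.min (nu x) (nu y) <= nu (x + y);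
  nu_emb : forall c, c != 0 -> nu (emb c) = 0;
  tau_neq0 : tau != 0;
  nu_tau : nu tau = 1;
  nu_surj : forall q : rat, exists2 x, x != 0 & nu x = q;
  l0_emb : forall c, l0 (emb c) = c;
  l0D : forall x y, vnonneg nu x -> vnonneg nu y -> l0 (x + y) = l0 x + l0 y;
  l0M : forall x y, vnonneg nu x -> vnonneg nu y -> l0 (x * y) = l0 x * l0 y;
  l0_eq0 : forall x, vnonneg nu x -> (l0 x = 0 <-> (x = 0 \/ 0 < nu x))
}.

Definition is_power_series (F L : fieldType) (emb : {rmorphism F -> L}) (tau : L)
  (nu : L -> rat) (a : nat -> F) (x : L) : Prop :=
  forall K : nat,
    let r := x - \sum_(k < K) emb (a k) * tau ^+ k in r = 0 \/ K%:Q <= nu r.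

Section Homotopy.
Variables (K : fieldType) (F : closedFieldType) (iota : {rmorphism K -> F}).
Variables (L : closedFieldType) (emb : {rmorphism F -> L}) (tau : L).
Variables (N : nat) (f g : 'I_N -> {mpoly K[N]}).

(* homot = t f + (1 - t) g with t = tau + 1, i.e. (tau+1) f - tau g,   *)
(* tau being specialized to the element tau of L.                      *)
Definition homot (i : 'I_N) : {mpoly L[N]} :=
  (tau + 1) *: map_mpoly (emb \o iota) (f i)
  - tau *: map_mpoly (emb \o iota) (g i).

Definition homotD : {mpoly L[N]} := jacdet homot.

Definition in_saturation (p : {mpoly L[N]}) : Prop :=
  exists (k : nat) (a : 'I_N -> {mpoly L[N]}),
    homotD ^+ k * p = \sum_(i < N) a i * homot i.

Definition in_Zset (x : 'I_N -> L) : Prop :=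
  forall p, in_saturation p -> p.@[x] = 0.

End Homotopy.

From HB Require Import structures.
From mathcomp Require Import all_boot all_order all_algebra all_field.
From mathcomp Require Import mpoly.
From mathcomp Require Import ring.
From Stdlib Require Import FunctionalExtensionality.
Import Order.TTheory GRing.Theory Num.Theory.
Local Open Scope ring_scope.
Set Implicit Arguments.
Unset Strict Implicit.

(* Suppose phi_i = l0(Phi_i) = l0(Phi_i') with Phi_i' integral.  Both points
   cancel homot = (tau + 1) f - tau g, and a first order expansion gives
   0 = homot(Phi_i') - homot(Phi_i) = M (Phi_i' - Phi_i), where M has integral
   entries whose residues (l0) form the Jacobian matrix of f at phi_i, because
   l0(tau) = 0.  As phi_i is a regular zero of f, det M has a nonzero residue,
   so M is invertible and Phi_i' = Phi_i, contradicting i <> i'. *)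

Lemma mpoly_ring_ind (R : comNzRingType) (N : nat) (P : {mpoly R[N]} -> Prop) :
  (forall c, P c%:MP) -> (forall i, P 'X_i) ->
  (forall p q, P p -> P q -> P (p + q)) -> (forall p q, P p -> P q -> P (p * q)) ->
  forall p, P p.
Proof.
move=> PC PX PD PM; elim/mpolyind => [|c mo p _ _ Pp]; first by rewrite -mpolyC0.
apply: (PD _ _ _ Pp); rewrite -mul_mpolyC mpolyXE_id; apply: (PM _ _ (PC c)).
apply: (big_ind P) => [||i _]; [by rewrite -mpolyC1 | exact: PM | ].
by elim: (mo i) => [|k IHk]; [rewrite expr0 -mpolyC1 | rewrite exprS; apply: PM].
Qed.

Section Residue.
Variables (F L : fieldType) (emb : {rmorphism F -> L}) (tau : L)
  (nu : L -> rat) (l0 : L -> F).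
Hypothesis HL : hahn_like emb tau nu l0.

Definition has_residue (x : L) (c : F) : Prop := vnonneg nu x /\ l0 x = c.

Lemma residue_emb c : has_residue (emb c) c.
Proof.
split; last exact: (l0_emb HL c).
by have [->|c0] := eqVneq c 0; [rewrite rmorph0; left | right; rewrite (nu_emb HL c0)].
Qed.

Lemma residue0 : has_residue 0 0.
Proof. by rewrite -(rmorph0 emb); apply: residue_emb. Qed.

Lemma residue1 : has_residue 1 1.
Proof. by rewrite -(rmorph1 emb); apply: residue_emb. Qed.

Lemma residueD x y a b :
  has_residue x a -> has_residue y b -> has_residue (x + y) (a + b).
Proof.
move=> [Vx <-] [Vy <-]; split; last exact: (l0D HL Vx Vy).
case: Vx => [->|nux]; first by rewrite add0r.
case: Vy => [->|nuy]; first by rewrite addr0; right.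
have [->|xy0] := eqVneq (x + y) 0; first by left.
have [->|x0] := eqVneq x 0; first by rewrite add0r; right.
have [->|y0] := eqVneq y 0; first by rewrite addr0; right.
by right; apply: le_trans (nuD HL x0 y0 xy0); rewrite le_min nux nuy.
Qed.

Lemma residueM x y a b :
  has_residue x a -> has_residue y b -> has_residue (x * y) (a * b).
Proof.
move=> [Vx <-] [Vy <-]; split; last exact: (l0M HL Vx Vy).
case: Vx => [->|nux]; first by rewrite mul0r; left.
case: Vy => [->|nuy]; first by rewrite mulr0; left.
have [->|x0] := eqVneq x 0; first by rewrite mul0r; left.
have [->|y0] := eqVneq y 0; first by rewrite mulr0; left.
by right; rewrite (nuM HL x0 y0) addr_ge0.
Qed.

Lemma residueN x a : has_residue x a -> has_residue (- x) (- a).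
Proof.
by move=> xa; rewrite -mulN1r -[- a]mulN1r -(rmorphN1 emb); exact: residueM (residue_emb _) xa.
Qed.

Lemma residueB x y a b :
  has_residue x a -> has_residue y b -> has_residue (x - y) (a - b).
Proof. by move=> xa /residueN; apply: residueD. Qed.

Lemma residue_sum (I : Type) (r : seq I) (P : pred I) (G : I -> L) (c : I -> F) :
  (forall i, P i -> has_residue (G i) (c i)) ->
  has_residue (\sum_(i <- r | P i) G i) (\sum_(i <- r | P i) c i).
Proof. by move=> Gc; apply: (big_ind2 has_residue residue0) => // *; apply: residueD. Qed.

Lemma residue_prod (I : Type) (r : seq I) (P : pred I) (G : I -> L) (c : I -> F) :
  (forall i, P i -> has_residue (G i) (c i)) ->
  has_residue (\prod_(i <- r | P i) G i) (\prod_(i <- r | P i) c i).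
Proof. by move=> Gc; apply: (big_ind2 has_residue residue1) => // *; apply: residueM. Qed.

Lemma residue_det (n : nat) (M : 'M[L]_n) (A : 'M[F]_n) :
  (forall i j, has_residue (M i j) (A i j)) -> has_residue (\det M) (\det A).
Proof.
move=> MA; apply: residue_sum => s _; rewrite -(rmorph_sign emb).
by apply: residueM (residue_emb _) _; apply: residue_prod.
Qed.

Lemma unitmx_of_residue (n : nat) (M : 'M[L]_n) (A : 'M[F]_n) :
  (forall i j, has_residue (M i j) (A i j)) -> \det A != 0 -> M \in unitmx.
Proof.
move=> /residue_det [_ <-]; rewrite unitmxE unitfE; apply: contraNneq => ->.
by rewrite -(rmorph0 emb) (l0_emb HL).
Qed.

Lemma residue_tau : has_residue tau 0.
Proof.
have Vtau : vnonneg nu tau by right; rewrite (nu_tau HL).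
by split=> //; apply/(l0_eq0 HL Vtau); right; rewrite (nu_tau HL).
Qed.

Lemma residue_power_series (a : nat -> F) x :
  is_power_series emb tau nu a x -> has_residue x (a 0%N).
Proof.
move=> /(_ 1%N); rewrite /= big_ord1 expr0 mulr1.
set r := x - _ => r_small.
have Vr : vnonneg nu r by case: r_small => [->|le1]; [left | right; apply: le_trans le1].
have r0 : has_residue r 0.
  split=> //; apply/(l0_eq0 HL Vr).
  by case: r_small => [->|le1]; [left | right; apply: lt_le_trans le1].
by have := residueD r0 (residue_emb (a 0%N)); rewrite /r subrK add0r.
Qed.

Lemma residue_meval (N : nat) (x : 'I_N -> L) (c : 'I_N -> F) (P : {mpoly F[N]}) :
  (forall k, has_residue (x k) (c k)) -> has_residue (map_mpoly emb P).@[x] P.@[c].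
Proof.
move=> xc; elim/mpoly_ring_ind: P => [a|i|p q|p q].
- by rewrite map_mpolyC !mevalC; apply: residue_emb.
- by rewrite map_mpolyX !mevalXU.
- by rewrite rmorphD !mevalD; apply: residueD.
- by rewrite rmorphM !mevalM; apply: residueM.
Qed.

Section Expansion.
Variables (N : nat) (x y : 'I_N -> L) (c : 'I_N -> F).
Hypotheses (xc : forall k, has_residue (x k) (c k)) (yc : forall k, has_residue (y k) (c k)).

Lemma mderivX_meval (i k : 'I_N) : (mderiv k ('X_i : {mpoly F[N]})).@[c] = (k == i)%:R.
Proof.
rewrite mderivX mevalZ mnm1E; have [->|_] := eqVneq k i; last by rewrite mul0r.
have -> : (U_(i) - U_(i))%MM = 0%MM by apply/mnmP => j; rewrite mnmBE subnn mnmE.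
by rewrite mpolyX0 mevalC mulr1.
Qed.

Lemma meval_sub_factor (P : {mpoly F[N]}) : exists q : 'I_N -> L,
  (map_mpoly emb P).@[y] - (map_mpoly emb P).@[x] = \sum_k (y k - x k) * q k /\
  forall k, has_residue (q k) (mderiv k P).@[c].
Proof.
elim/mpoly_ring_ind: P => [a|i|p q [qp [dp rp]] [qq [dq rq]]|
                            p q [qp [dp rp]] [qq [dq rq]]].
- exists (fun _ => 0); rewrite map_mpolyC !mevalC subrr big1 => [|k _]; last exact: mulr0.
  by split=> // k; rewrite mderivC mevalC; apply: residue0.
- exists (fun k => (k == i)%:R); rewrite map_mpolyX !mevalXU; split.
    rewrite (bigD1 i) //= eqxx mulr1 big1 ?addr0 // => k /negbTE ->.
    by rewrite mulr0.
  by move=> k; rewrite mderivX_meval -(rmorph_nat emb); apply: residue_emb.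
- exists (fun k => qp k + qq k); split => [|k]; last first.
    by rewrite mderivD mevalD; apply: residueD.
  rewrite rmorphD !mevalD opprD addrACA dp dq -big_split /=.
  by apply: eq_bigr => k _; rewrite mulrDr.
- exists (fun k => (map_mpoly emb p).@[y] * qq k + qp k * (map_mpoly emb q).@[x]).
  split => [|k]; last first.
    rewrite mderivM mevalD !mevalM addrC.
    by apply: residueD; apply: residueM => //; apply: residue_meval.
  rewrite rmorphM !mevalM.
  set py := (map_mpoly emb p).@[y]; set px := (map_mpoly emb p).@[x].
  set qy := (map_mpoly emb q).@[y]; set qx := (map_mpoly emb q).@[x].
  have -> : py * qy - px * qx = py * (qy - qx) + (py - px) * qx by ring.
  by rewrite dp dq mulr_sumr mulr_suml -big_split /=; apply: eq_bigr => k _; ring.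
Qed.

End Expansion.
End Residue.

Section HomotopyZeros.
Variables (K : fieldType) (F : closedFieldType) (iota : {rmorphism K -> F}).
Variables (L : closedFieldType) (emb : {rmorphism F -> L}) (tau : L)
  (nu : L -> rat) (l0 : L -> F).
Hypothesis HL : hahn_like emb tau nu l0.
Variables (N : nat) (f g : 'I_N -> {mpoly K[N]}).

Local Notation h := (homot iota emb tau f g).
Local Notation lift p := (map_mpoly emb (map_mpoly iota p)).

Lemma homot_eq0_of_Zset x : in_Zset iota emb tau f g x -> forall j, (h j).@[x] = 0.
Proof.
move=> Zx j; apply: Zx; exists 0%N, (fun l => (l == j)%:R).
rewrite expr0 mul1r (bigD1 j) //= eqxx mul1r big1 ?addr0 // => l /negbTE ->.
by rewrite mul0r.
Qed.

Lemma meval_homot j z :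
  (h j).@[z] = (tau + 1) * (lift (f j)).@[z] - tau * (lift (g j)).@[z].
Proof.
have lift_comp p : map_mpoly (emb \o iota) p = lift p.
  by apply/mpolyP => mo; rewrite !mcoeff_map_mpoly.
by rewrite mevalB !mevalZ !lift_comp.
Qed.

Lemma homot_sub_factor (x y : 'I_N -> L) (c : 'I_N -> F) :
    (forall k, has_residue nu l0 (x k) (c k)) ->
    (forall k, has_residue nu l0 (y k) (c k)) ->
  exists M : 'M[L]_N,
    (forall j, (h j).@[y] - (h j).@[x] = \sum_k M j k * (y k - x k)) /\
    (forall j k, has_residue nu l0 (M j k) (mderiv k (map_mpoly iota (f j))).@[c]).
Proof.
move=> xc yc.
have [qf qf_spec] := fin_all_exists
  (fun j => meval_sub_factor HL xc yc (map_mpoly iota (f j))).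
have [qg qg_spec] := fin_all_exists
  (fun j => meval_sub_factor HL xc yc (map_mpoly iota (g j))).
exists (\matrix_(j, k) ((tau + 1) * qf j k - tau * qg j k)); split=> [j|j k].
  have [ef _] := qf_spec j; have [eg _] := qg_spec j.
  rewrite !meval_homot.
  set fy := (lift (f j)).@[y]; set fx := (lift (f j)).@[x].
  set gy := (lift (g j)).@[y]; set gx := (lift (g j)).@[x].
  have -> : (tau + 1) * fy - tau * gy - ((tau + 1) * fx - tau * gx) =
            (tau + 1) * (fy - fx) - tau * (gy - gx) by ring.
  rewrite ef eg !mulr_sumr -sumrB; apply: eq_bigr => k _; rewrite mxE; ring.
have [_ rf] := qf_spec j; have [_ rg] := qg_spec j.
have := residueD HL (residue_tau HL) (residue1 HL); rewrite add0r => tau1.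
have := residueB HL (residueM HL tau1 (rf k)) (residueM HL (residue_tau HL) (rg k)).
by rewrite mxE mul1r mul0r subr0.
Qed.

Lemma homot_zeros_eq_of_residue (x y : 'I_N -> L) (c : 'I_N -> F) :
    (forall k, has_residue nu l0 (x k) (c k)) ->
    (forall k, has_residue nu l0 (y k) (c k)) ->
    (forall j, (h j).@[x] = 0) -> (forall j, (h j).@[y] = 0) ->
    (jacdet (fun j => map_mpoly iota (f j))).@[c] != 0 ->
  x = y.
Proof.
move=> xc yc hx0 hy0 jac_c.
have [M [hM Mres]] := homot_sub_factor xc yc.
pose J := \matrix_(j, k) (mderiv k (map_mpoly iota (f j))).@[c].
have M_unit : M \in unitmx.
  apply: (unitmx_of_residue (A := J) HL) => [j k|]; first by rewrite mxE.
  move: jac_c; rewrite /jacdet -det_map_mx; congr (\det _ != 0).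
  by apply/matrixP => j k; rewrite !mxE.
pose D := \col_k (y k - x k).
have MD0 : M *m D = 0.
  apply/matrixP => j l; rewrite !mxE.
  transitivity ((h j).@[y] - (h j).@[x]); last by rewrite hx0 hy0 subrr.
  by rewrite hM; apply: eq_bigr => k _; rewrite mxE.
have D0 : D = 0 by rewrite -(mulKmx M_unit D) MD0 mulmx0.
apply: functional_extensionality => k; apply/eqP; rewrite eq_sym -subr_eq0.
by have := congr1 (fun A : 'cV_N => A k ord0) D0; rewrite !mxE => ->.
Qed.

End HomotopyZeros.

Theorem lemma3p7
  (* the perfect field K, its algebraic closure Kbar = F *)
  (K : fieldType) (F : closedFieldType) (iota : {rmorphism K -> F})
  (HKperf : perfect_field K) (HF : is_algebraic_closure iota)
  (* block structure n = (n_1,...,n_m), N = n_1 + ... + n_m *)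
  (m : nat) (n : 'I_m -> nat)
  (* the system f and the multidegree bounds d *)
  (d : 'I_(Ntot n) -> 'I_m -> nat) (f : 'I_(Ntot n) -> {mpoly K[Ntot n]})
  (Hfnc : forall i, nonconstant (f i))
  (Hfdeg : forall i, multideg_le n (f i) (d i))
  (Hchar : [pchar K] =i pred0 \/
           exists2 p, p \in [pchar K] &
             (\max_(j < m) \sum_(i < Ntot n) d i j <= p)%N)
  (* the field L of generalized power series *)
  (L : closedFieldType) (emb : {rmorphism F -> L}) (tau : L)
  (nu : L -> rat) (l0 : L -> F) (HL : hahn_like emb tau nu l0)
  (* the points Phi_1, ..., Phi_c of Z, c = C_n(d) *)
  (Phi : 'I_(Cnd d) -> ('I_(Ntot n) -> L))
  (HPhi_inj : injective Phi)
  (HZ : forall x, in_Zset iota emb tau f (startsys K n d) x <-> exists i, x = Phi i)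
  (* the regular zeros phi_1, ..., phi_s of f *)
  (s : nat) (phi : 'I_s -> ('I_(Ntot n) -> F)) (Hphi_inj : injective phi)
  (Hphi : forall x : 'I_(Ntot n) -> F,
     ((forall i, (map_mpoly iota (f i)).@[x] = 0) /\
      (jacdet (fun i => map_mpoly iota (f i))).@[x] != 0)
     <-> exists k, x = phi k)
  (Hsc : (s <= Cnd d)%N)
  (* Phi_1, ..., Phi_s are the power series with l0(Phi_i) = phi_i *)
  (HPhi_ps : forall i : 'I_s, exists2 a : 'I_(Ntot n) -> nat -> F,
     (forall j, a j 0%N = phi i j) &
     (forall j, is_power_series emb tau nu (a j) (Phi (widen_ord Hsc i) j)))
  (* c' : Phi_1, ..., Phi_c' are exactly those with all coordinates of
     nonnegative valuation *)
  (c' : nat) (Hc'1 : (s <= c')%N) (Hc'2 : (c' <= Cnd d)%N)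
  (Hc' : forall i : 'I_(Cnd d),
     (i < c')%N <-> (forall j, vnonneg nu (Phi i j))) :
  forall i i' : 'I_(Cnd d), (i < s)%N -> (s <= i')%N -> (i' < c')%N ->
    (fun j => l0 (Phi i j)) <> (fun j => l0 (Phi i' j)).
Proof.
move=> i i' lt_is le_si' lt_i'c' l0_eq.
pose i0 : 'I_s := Ordinal lt_is.
have res_i k : has_residue nu l0 (Phi i k) (phi i0 k).
  have [a <- Phi_ps] := HPhi_ps i0.
  have -> : Phi i = Phi (widen_ord Hsc i0) by congr Phi; apply: val_inj.
  exact: (residue_power_series HL (Phi_ps k)).
have res_i' k : has_residue nu l0 (Phi i' k) (phi i0 k).
  split; first exact: (Hc' i').1.
  by rewrite -(res_i k).2 (congr1 (fun l => l k) l0_eq).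
have homot_Phi0 k : forall j, (homot iota emb tau f (startsys K n d) j).@[Phi k] = 0.
  by apply: homot_eq0_of_Zset; apply/HZ; exists k.
have jac_phi : (jacdet (fun j => map_mpoly iota (f j))).@[phi i0] != 0.
  by have [_] := (Hphi (phi i0)).2 (ex_intro _ i0 erefl).
have /HPhi_inj eq_ii' := homot_zeros_eq_of_residue HL res_i res_i'
  (homot_Phi0 i) (homot_Phi0 i') jac_phi.
by move: le_si'; rewrite -eq_ii' leqNgt lt_is.
Qed.
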